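(* Let $\Omega\subset\mathbb{R}^{4p}\simeq\mathbb{C}^{2p}$ be open. A differentiable function $F:\Omega\to\mathbb{S}$ is q-monogenic in $\Omega$ if and only if $F$ is in $\Omega$ a simultaneous null solution of the four operators $\partial_{\underline z}$, $\partial_{\underline z}^\dagger$, $\partial_{\underline z}^J$ and $\partial_{\underline z}^{\dagger J}$.
   Context: Coordinates on $\mathbb{R}^{4p}$: $(X_1,\dots,X_{4p})=(x_1,y_1,\dots,x_{2p},y_{2p})$, $z_k=x_k+iy_k$, $\partial_{z_k}=\tfrac12(\partial_{x_k}-i\partial_{y_k})$, $\partial_{\bar z_k}=\tfrac12(\partial_{x_k}+i\partial_{y_k})$. $\mathbb{C}_{4p}$ is the complex Clifford algebra generated by $e_1,\dots,e_{4p}$ with $e_\alpha e_\beta+e_\beta e_\alpha=-2\delta_{\alpha\beta}$. Witt basis: $\mathfrak f_k=\tfrac12(-e_{2k-1}+ie_{2k})$, $\mathfrak f_k^\dagger=\tfrac12(e_{2k-1}+ie_{2k})$, $k=1,\dots,2p$. $I=\prod_{k=1}^{2p}\mathfrak f_k\mathfrak f_k^\dagger$, spinor space $\mathbb S=\mathbb C_{4p}I$. Operators (acting by left multiplication on $\mathbb S$-valued functions): $\partial_{\underline z}=\sum_{k=1}^{2p}\mathfrak f_k^\dagger\partial_{z_k}$, $\partial_{\underline z}^\dagger=\sum_{k=1}^{2p}\mathfrak f_k\partial_{\bar z_k}$, $\partial_{\underline z}^J=\sum_{j=1}^p(\mathfrak f_{2j-1}\partial_{z_{2j}}-\mathfrak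 f_{2j}\partial_{z_{2j-1}})$, $\partial_{\underline z}^{\dagger J}=\sum_{j=1}^p(\mathfrak f^\dagger_{2j-1}\partial_{\bar z_{2j}}-\mathfrak f^\dagger_{2j}\partial_{\bar z_{2j-1}})$. Define real linear maps: $\mathbb{I}(e_{2k-1})=e_{2k}$, $\mathbb{I}(e_{2k})=-e_{2k-1}$; for $j=1,\dots,p$: $\mathbb{J}(e_{4j-3})=e_{4j-1}$, $\mathbb{J}(e_{4j-2})=-e_{4j}$, $\mathbb{J}(e_{4j-1})=-e_{4j-3}$, $\mathbb{J}(e_{4j})=e_{4j-2}$; $\mathbb K=\mathbb I\mathbb J$. $\underline\partial=\sum_\alpha e_\alpha\partial_{X_\alpha}$, $\underline\partial_M=\sum_\alpha M(e_\alpha)\partial_{X_\alpha}$ for $M\in\{\mathbb I,\mathbb J,\mathbb K\}$. $F$ is q-monogenic in $\Omega$ if $\underline\partial F=\underline\partial_{\mathbb I}F=\underline\partial_{\mathbb J}F=\underline\partial_{\mathbb K}F=0$ there. *)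

From HB Require Import structures.
From mathcomp Require Import all_boot all_order all_algebra.
From mathcomp Require Import all_classical all_reals.
From mathcomp Require Import topology normedtype derive.
From mathcomp Require Import complex.
From mathcomp Require Import zify.

Set Implicit Arguments.
Unset Strict Implicit.
Unset Printing Implicit Defensive.

Import Order.TTheory GRing.Theory Num.Theory.
Import numFieldNormedType.Exports.
Local Open Scope ring_scope.
Local Open Scope complex_scope.

Section Clifford.
Variable R : realType.
Variable n : nat.

(** The complex Clifford algebra C_n: coefficients (in R[i]) on the basis
    blades e_A, A a subset of {0,..,n-1} (0-indexed generators). *)
Definition clif := {ffun {set 'I_n} -> R[i]}.

Definition cl0 : clif := [ffun => 0].
Definition cladd (x y : clif) : clif := [ffun A => x A + y A].
Definition clopp (x : clif) : clif := [ffun A => - x A].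
Definition clsub (x y : clif) : clif := cladd x (clopp y).
Definition clscale (c : R[i]) (x : clif) : clif := [ffun A => c * x A].
Definition clsum (I : finType) (P : pred I) (f : I -> clif) : clif :=
  [ffun A => \sum_(i | P i) f i A].

Definition blade (A : {set 'I_n}) : clif := [ffun B => (B == A)%:R].
Definition cl1 : clif := blade (finset.set0 : {set 'I_n}).

(** e_A e_B = (-1)^(#{(a,b) in A x B | a > b} + #|A :&: B|) e_(A sym.diff. B),
    which encodes e_a e_b = - e_b e_a (a <> b) and e_a^2 = -1. *)
Definition blade_sign (A B : {set 'I_n}) : R[i] :=
  (-1) ^+ (#|[set ab : 'I_n * 'I_n | (ab.1 \in A) && (ab.2 \in B) &&
                                     (ab.2 < ab.1)%N]| + #|A :&: B|).

Definition clmul (x y : clif) : clif :=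
  [ffun C => \sum_(A : {set 'I_n}) \sum_(B : {set 'I_n} | (A :\: B) :|: (B :\: A) == C)
               blade_sign A B * x A * y B].

Definition gen (a : 'I_n) : clif := blade [set a].

Definition clvec (v : 'I_n -> R) : clif := clsum predT (fun b => clscale (v b)%:C (gen b)).

End Clifford.

Arguments cladd {R n}. Arguments clopp {R n}. Arguments clsub {R n}.
Arguments clscale {R n}. Arguments clsum {R n I}. Arguments blade {R n}.
Arguments clmul {R n}. Arguments gen {R n}. Arguments clvec {R n}.
Arguments blade_sign {R n}.

Lemma ox_proof (p : nat) (k : 'I_(2 * p)) : (k.*2 < 4 * p)%N.
Proof. by case: k => k /= hk; rewrite -muln2; lia. Qed.
Lemma oy_proof (p : nat) (k : 'I_(2 * p)) : (k.*2.+1 < 4 * p)%N.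
Proof. by case: k => k /= hk; rewrite -muln2; lia. Qed.
Lemma oodd_proof (p : nat) (j : 'I_p) : (j.*2 < 2 * p)%N.
Proof. by case: j => j /= hj; rewrite -muln2; lia. Qed.
Lemma oeven_proof (p : nat) (j : 'I_p) : (j.*2.+1 < 2 * p)%N.
Proof. by case: j => j /= hj; rewrite -muln2; lia. Qed.

(** 0-indexed: x_k (paper index 2k-1) and y_k (paper index 2k), k = 1..2p *)
Definition ox (p : nat) (k : 'I_(2 * p)) : 'I_(4 * p) := Ordinal (ox_proof k).
Definition oy (p : nat) (k : 'I_(2 * p)) : 'I_(4 * p) := Ordinal (oy_proof k).
(** paper indices 2j-1 and 2j in {1..2p}, j = 1..p *)
Definition o2jm1 (p : nat) (j : 'I_p) : 'I_(2 * p) := Ordinal (oodd_proof j).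
Definition o2j (p : nat) (j : 'I_p) : 'I_(2 * p) := Ordinal (oeven_proof j).

Section Setting.
Variable R : realType.
Variable p : nat.
Local Notation n := (4 * p)%N.
Local Notation Cl := (clif R n).
Local Notation "x * y" := (clmul x y) : clif_scope.
Delimit Scope clif_scope with C.

Definition witt (k : 'I_(2 * p)) : Cl :=
  clscale (1/2)%:C (cladd (clopp (gen (ox k))) (clscale 'i (gen (oy k)))).
Definition wittd (k : 'I_(2 * p)) : Cl :=
  clscale (1/2)%:C (cladd (gen (ox k)) (clscale 'i (gen (oy k)))).

Definition Iprim : Cl := \big[@clmul R n/cl1 R n]_(k < 2 * p) clmul (witt k) (wittd k).
Definition in_spinor (s : Cl) : Prop := exists y : Cl, s = clmul y Iprim.

(** real linear maps I, J, K on span{e_alpha}: M(e_a) = sum_b M a b e_b.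
    0-indexed: paper e_{2k-1}, e_{2k} are e_(2k-2), e_(2k-1). *)
Definition Imat : 'M[R]_n := \matrix_(a, b)
  if ~~ odd a then ((b : nat) == a.+1)%N%:R else - ((b : nat) == a.-1)%N%:R.
Definition Jmat : 'M[R]_n := \matrix_(a, b)
  if (a %% 4 == 0)%N then ((b : nat) == a + 2)%N%:R
  else if (a %% 4 == 1)%N then - ((b : nat) == a + 2)%N%:R
  else if (a %% 4 == 2)%N then - ((b : nat) == a - 2)%N%:R
  else ((b : nat) == a - 2)%N%:R.
(** K = I o J : K(e_a) = I(J(e_a)) = sum_b J a b I(e_b) *)
Definition Kmat : 'M[R]_n := Jmat *m Imat.

Definition Mapp (M : 'M[R]_n) (a : 'I_n) : Cl := clvec (fun b => M a b).

Definition reF (F : 'rV[R]_n -> Cl) (A : {set 'I_n}) : 'rV[R]_n -> R :=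
  fun X => complex.Re (F X A).
Definition imF (F : 'rV[R]_n -> Cl) (A : {set 'I_n}) : 'rV[R]_n -> R :=
  fun X => complex.Im (F X A).

Definition unitv (a : 'I_n) : 'rV[R]_n := \row_b ((b == a)%:R).

Definition partial (a : 'I_n) (F : 'rV[R]_n -> Cl) (X : 'rV[R]_n) : Cl :=
  [ffun A => Complex ('D_(unitv a) (reF F A) X) ('D_(unitv a) (imF F A) X)].

Definition cl_differentiable (F : 'rV[R]_n -> Cl) (X : 'rV[R]_n) : Prop :=
  forall A, differentiable (reF F A) X /\ differentiable (imF F A) X.

Definition Dirac (F : 'rV[R]_n -> Cl) (X : 'rV[R]_n) : Cl :=
  clsum predT (fun a => clmul (gen a) (partial a F X)).
Definition DiracM (M : 'M[R]_n) (F : 'rV[R]_n -> Cl) (X : 'rV[R]_n) : Cl :=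
  clsum predT (fun a => clmul (Mapp M a) (partial a F X)).

Definition q_monogenic (Omega : set 'rV[R]_n) (F : 'rV[R]_n -> Cl) : Prop :=
  forall X, Omega X ->
    [/\ Dirac F X = cl0 R n, DiracM Imat F X = cl0 R n,
        DiracM Jmat F X = cl0 R n & DiracM Kmat F X = cl0 R n].

Definition dz (k : 'I_(2 * p)) (F : 'rV[R]_n -> Cl) (X : 'rV[R]_n) : Cl :=
  clscale (1/2)%:C (clsub (partial (ox k) F X) (clscale 'i (partial (oy k) F X))).
Definition dzb (k : 'I_(2 * p)) (F : 'rV[R]_n -> Cl) (X : 'rV[R]_n) : Cl :=
  clscale (1/2)%:C (cladd (partial (ox k) F X) (clscale 'i (partial (oy k) F X))).

Definition Dz (F : 'rV[R]_n -> Cl) (X : 'rV[R]_n) : Cl :=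
  clsum predT (fun k => clmul (wittd k) (dz k F X)).
Definition Dzd (F : 'rV[R]_n -> Cl) (X : 'rV[R]_n) : Cl :=
  clsum predT (fun k => clmul (witt k) (dzb k F X)).
Definition DzJ (F : 'rV[R]_n -> Cl) (X : 'rV[R]_n) : Cl :=
  clsum predT (fun j : 'I_p =>
    clsub (clmul (witt (o2jm1 j)) (dz (o2j j) F X))
          (clmul (witt (o2j j)) (dz (o2jm1 j) F X))).
Definition DzdJ (F : 'rV[R]_n -> Cl) (X : 'rV[R]_n) : Cl :=
  clsum predT (fun j : 'I_p =>
    clsub (clmul (wittd (o2jm1 j)) (dzb (o2j j) F X))
          (clmul (wittd (o2j j)) (dzb (o2jm1 j) F X))).

End Setting.

From HB Require Import structures.
From mathcomp Require Import all_boot all_order all_algebra.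
From mathcomp Require Import all_classical all_reals.
From mathcomp Require Import topology normedtype derive.
From mathcomp Require Import complex.
From mathcomp Require Import ring zify.

(** Writing D, D_I, D_J, D_K for the four real Dirac operators, the Hermitian
    operators are the linear combinations
      4 ∂_z = D + i D_I,       -4 ∂_z^† = D - i D_I,
      4 ∂_z^J = D_J - i D_K,   -4 ∂_z^{†J} = D_J + i D_K,
    since I pairs e_{x_k} with e_{y_k} and J pairs the coordinates of z_{2j-1}
    with those of z_{2j}. Each pair of identities is invertible. *)

Import Order.TTheory GRing.Theory Num.Theory.
Import numFieldNormedType.Exports.
Local Open Scope ring_scope.
Local Open Scope complex_scope.

Section CliffordAlgebra.
Variable R : realType.
Variable n : nat.
Local Notation Cl := (clif R n).

Lemma cl_eq0 (x : Cl) : x = cl0 R n <-> forall A, x A = 0.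
Proof.
split=> [-> A|x0]; first by rewrite ffunE.
by apply/ffunP => A; rewrite x0 ffunE.
Qed.

Lemma clsumE (I : finType) (f : I -> Cl) A : clsum predT f A = \sum_i f i A.
Proof. by rewrite ffunE. Qed.

Lemma clmulDl (x y z : Cl) : clmul (cladd x y) z = cladd (clmul x z) (clmul y z).
Proof.
apply/ffunP => C; rewrite !ffunE -big_split; apply: eq_bigr => A _.
by rewrite -big_split; apply: eq_bigr => B _; rewrite !ffunE /=; ring.
Qed.

Lemma clmulDr (x y z : Cl) : clmul x (cladd y z) = cladd (clmul x y) (clmul x z).
Proof.
apply/ffunP => C; rewrite !ffunE -big_split; apply: eq_bigr => A _.
by rewrite -big_split; apply: eq_bigr => B _; rewrite !ffunE /=; ring.
Qed.

Lemma clmulZl c (x y : Cl) : clmul (clscale c x) y = clscale c (clmul x y).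
Proof.
apply/ffunP => C; rewrite !ffunE mulr_sumr; apply: eq_bigr => A _.
by rewrite mulr_sumr; apply: eq_bigr => B _; rewrite !ffunE; ring.
Qed.

Lemma clmulZr c (x y : Cl) : clmul x (clscale c y) = clscale c (clmul x y).
Proof.
apply/ffunP => C; rewrite !ffunE mulr_sumr; apply: eq_bigr => A _.
by rewrite mulr_sumr; apply: eq_bigr => B _; rewrite !ffunE; ring.
Qed.

Lemma clmulNl (x y : Cl) : clmul (clopp x) y = clopp (clmul x y).
Proof.
apply/ffunP => C; rewrite !ffunE -sumrN; apply: eq_bigr => A _.
by rewrite -sumrN; apply: eq_bigr => B _; rewrite !ffunE; ring.
Qed.

Lemma clmulNr (x y : Cl) : clmul x (clopp y) = clopp (clmul x y).
Proof.
apply/ffunP => C; rewrite !ffunE -sumrN; apply: eq_bigr => A _.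
by rewrite -sumrN; apply: eq_bigr => B _; rewrite !ffunE; ring.
Qed.

Lemma clscale1 (x : Cl) : clscale 1%:C x = x.
Proof. by apply/ffunP => A; rewrite ffunE mul1r. Qed.

Lemma clscaleN1 (x : Cl) : clscale (-1)%:C x = clopp x.
Proof. by apply/ffunP => A; rewrite !ffunE rmorphN1 mulN1r. Qed.

Lemma clvec_delta (v : 'I_n -> R) b0 s :
  (forall b, v b = s * (b == b0)%:R) -> clvec v = clscale s%:C (gen b0).
Proof.
move=> vE; apply/ffunP => A; rewrite !ffunE (bigD1 b0) //= big1 ?addr0.
  by rewrite vE eqxx mulr1 !ffunE.
by move=> b /negbTE nb; rewrite vE nb mulr0 ffunE mul0r.
Qed.

End CliffordAlgebra.

Arguments clvec_delta {R n v b0 s}.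

Lemma big_ord_parity (V : zmodType) n m (lo hi : 'I_m -> 'I_n) :
  n = m.*2 -> (forall k, val (lo k) = (val k).*2) ->
  (forall k, val (hi k) = (val k).*2.+1) ->
  forall f : 'I_n -> V, \sum_a f a = \sum_k (f (lo k) + f (hi k)).
Proof.
move=> nE loE hiE f.
pose h (kb : 'I_m * bool) := if kb.2 then hi kb.1 else lo kb.1.
have half_lt (a : 'I_n) : (a./2 < m)%N by rewrite ltn_half_double -nE.
pose g (a : 'I_n) : 'I_m * bool := (Ordinal (half_lt a), odd a).
have hK : cancel h g.
  move=> [k []]; rewrite /h /g /=.
    by congr pair; [apply: val_inj; rewrite /= hiE /= uphalf_double | rewrite hiE /= odd_double].
  by congr pair; [apply: val_inj; rewrite /= loE doubleK | rewrite loE odd_double].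
have gK : cancel g h.
  move=> a; rewrite /h /g /=; apply: val_inj.
  by have := odd_double_half a; case: (odd a) => /=; rewrite ?hiE ?loE /=; lia.
rewrite (reindex h) /=; last by exists g => x _; [exact: hK | exact: gK].
rewrite -(pair_big xpredT xpredT (fun k b => f (h (k, b)))) /=.
by apply: eq_bigr => k _; rewrite big_bool /= addrC.
Qed.

Section ComplexStructures.
Variable R : realType.
Variable p : nat.
Local Notation n := (4 * p)%N.

Lemma Imat_ox k b : Imat R p (ox k) b = 1 * (b == oy k)%:R.
Proof. by rewrite mxE /= odd_double /= mul1r. Qed.

Lemma Imat_oy k b : Imat R p (oy k) b = -1 * (b == ox k)%:R.
Proof. by rewrite mxE /= odd_double /= mulN1r. Qed.

Ltac Jmat_case := rewrite mxE /=; repeat (case: ifP => ?; try (exfalso; lia)).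

Lemma Jmat_ox_odd j b : Jmat R p (ox (o2jm1 j)) b = 1 * (b == ox (o2j j))%:R.
Proof. by Jmat_case; rewrite mul1r (_ : j.*2.*2 + 2 = j.*2.+1.*2)%N //; lia. Qed.

Lemma Jmat_oy_odd j b : Jmat R p (oy (o2jm1 j)) b = -1 * (b == oy (o2j j))%:R.
Proof. by Jmat_case; rewrite mulN1r (_ : j.*2.*2.+1 + 2 = j.*2.+1.*2.+1)%N //; lia. Qed.

Lemma Jmat_ox_even j b : Jmat R p (ox (o2j j)) b = -1 * (b == ox (o2jm1 j))%:R.
Proof. by Jmat_case; rewrite mulN1r (_ : j.*2.+1.*2 - 2 = j.*2.*2)%N //; lia. Qed.

Lemma Jmat_oy_even j b : Jmat R p (oy (o2j j)) b = 1 * (b == oy (o2jm1 j))%:R.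
Proof. by Jmat_case; rewrite mul1r (_ : j.*2.+1.*2.+1 - 2 = j.*2.*2.+1)%N //; lia. Qed.

Lemma Kmat_delta {a c s} :
  (forall b, Jmat R p a b = s * (b == c)%:R) ->
  forall b, Kmat R p a b = s * Imat R p c b.
Proof.
move=> Ja b; rewrite /Kmat mxE (bigD1 c) //= big1 ?addr0; first by rewrite Ja eqxx mulr1.
by move=> d /negbTE nd; rewrite Ja nd mulr0 mul0r.
Qed.

Lemma MappI_ox k : Mapp (Imat R p) (ox k) = gen (oy k).
Proof. by rewrite /Mapp (clvec_delta (Imat_ox k)) clscale1. Qed.

Lemma MappI_oy k : Mapp (Imat R p) (oy k) = clopp (gen (ox k)).
Proof. by rewrite /Mapp (clvec_delta (Imat_oy k)) clscaleN1. Qed.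

Lemma MappJ_ox_odd j : Mapp (Jmat R p) (ox (o2jm1 j)) = gen (ox (o2j j)).
Proof. by rewrite /Mapp (clvec_delta (Jmat_ox_odd j)) clscale1. Qed.

Lemma MappJ_oy_odd j : Mapp (Jmat R p) (oy (o2jm1 j)) = clopp (gen (oy (o2j j))).
Proof. by rewrite /Mapp (clvec_delta (Jmat_oy_odd j)) clscaleN1. Qed.

Lemma MappJ_ox_even j : Mapp (Jmat R p) (ox (o2j j)) = clopp (gen (ox (o2jm1 j))).
Proof. by rewrite /Mapp (clvec_delta (Jmat_ox_even j)) clscaleN1. Qed.

Lemma MappJ_oy_even j : Mapp (Jmat R p) (oy (o2j j)) = gen (oy (o2jm1 j)).
Proof. by rewrite /Mapp (clvec_delta (Jmat_oy_even j)) clscale1. Qed.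

Lemma MappK_ox_odd j : Mapp (Kmat R p) (ox (o2jm1 j)) = gen (oy (o2j j)).
Proof.
rewrite /Mapp (@clvec_delta _ _ _ (oy (o2j j)) 1) ?clscale1 // => b.
by rewrite (Kmat_delta (Jmat_ox_odd j)) Imat_ox !mul1r.
Qed.

Lemma MappK_oy_odd j : Mapp (Kmat R p) (oy (o2jm1 j)) = gen (ox (o2j j)).
Proof.
rewrite /Mapp (@clvec_delta _ _ _ (ox (o2j j)) 1) ?clscale1 // => b.
by rewrite (Kmat_delta (Jmat_oy_odd j)) Imat_oy mulrA mulrNN !mul1r.
Qed.

Lemma MappK_ox_even j : Mapp (Kmat R p) (ox (o2j j)) = clopp (gen (oy (o2jm1 j))).
Proof.
rewrite /Mapp (@clvec_delta _ _ _ (oy (o2jm1 j)) (-1)) ?clscaleN1 // => b.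
by rewrite (Kmat_delta (Jmat_ox_even j)) Imat_ox mulrA mulr1.
Qed.

Lemma MappK_oy_even j : Mapp (Kmat R p) (oy (o2j j)) = clopp (gen (ox (o2jm1 j))).
Proof.
rewrite /Mapp (@clvec_delta _ _ _ (ox (o2jm1 j)) (-1)) ?clscaleN1 // => b.
by rewrite (Kmat_delta (Jmat_oy_even j)) Imat_oy mulrA mul1r.
Qed.

Lemma big_ord_xy (V : zmodType) (f : 'I_n -> V) :
  \sum_a f a = \sum_k (f (ox k) + f (oy k)).
Proof. by apply: big_ord_parity => //; rewrite -muln2; lia. Qed.

Lemma big_ord_pairs (V : zmodType) (f : 'I_(2 * p) -> V) :
  \sum_k f k = \sum_j (f (o2jm1 j) + f (o2j j)).
Proof. by apply: big_ord_parity => //; rewrite -muln2; lia. Qed.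

End ComplexStructures.

Section SquareRootOfMinusOne.
Variable T : numFieldType.
Variable c : T.
Hypothesis cc : c * c = -1.

Lemma add_sub_scaled_eq0 (x y : T) :
  x + c * y = 0 -> x - c * y = 0 -> x = 0 /\ y = 0.
Proof.
move=> sum0 diff0.
have x0 : x = 0.
  have x2 : x *+ 2 = (x + c * y) + (x - c * y) by ring.
  by move: x2; rewrite sum0 diff0 addr0 => /eqP; rewrite mulrn_eq0 => /eqP.
have cy0 : c * y = 0 by rewrite -sum0 x0 add0r.
have yE : y = - (c * (c * y)) by ring: cc.
by rewrite yE cy0 mulr0 oppr0.
Qed.

Lemma quarter_pair_eq0 (u v x y : T) :
  u = (x + c * y) / 4%:R -> v = - (x - c * y) / 4%:R ->
  (u = 0 /\ v = 0 <-> x = 0 /\ y = 0).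
Proof.
have quarter_eq0 (z : T) : (z / 4%:R == 0) = (z == 0).
  by rewrite mulf_eq0 invr_eq0 pnatr_eq0 orbF.
move=> -> ->; split=> [[/eqP u0 /eqP v0] | [-> ->]].
  move: u0 v0; rewrite !quarter_eq0 oppr_eq0 => /eqP u0 /eqP v0.
  exact: add_sub_scaled_eq0.
by rewrite mulr0 addr0 subr0 oppr0 mul0r.
Qed.

End SquareRootOfMinusOne.

Arguments quarter_pair_eq0 {T c} cc {u v x y}.

Lemma cl_quarter_pair_eq0 {R : realType} {n} {c : R[i]} {u v x y : clif R n} :
  c * c = -1 ->
  (forall A, u A = (x A + c * y A) / 4%:R) ->
  (forall A, v A = - (x A - c * y A) / 4%:R) ->
  (u = cl0 R n /\ v = cl0 R n <-> x = cl0 R n /\ y = cl0 R n).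
Proof.
move=> cc uE vE; rewrite !cl_eq0.
have xy_eq0 A := quarter_pair_eq0 cc (uE A) (vE A).
split=> [[u0 v0] | [x0 y0]]; split=> A.
- by have [] := (xy_eq0 A).1 (conj (u0 A) (v0 A)).
- by have [] := (xy_eq0 A).1 (conj (u0 A) (v0 A)).
- by have [] := (xy_eq0 A).2 (conj (x0 A) (y0 A)).
- by have [] := (xy_eq0 A).2 (conj (x0 A) (y0 A)).
Qed.

Section ComplexUnit.
Variable R : realType.

Lemma mulii : 'i%C * 'i%C = -1 :> R[i].
Proof. by rewrite -expr2 sqr_i. Qed.

Lemma mul_half_half (x : R[i]) : (1/2 : R)%:C * ((1/2 : R)%:C * x) = x / 4%:R.
Proof.
rewrite mulrA -rmorphM mulrC -[4%:R](rmorph_nat (@real_complex R)) -rmorphV; last first.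
  by rewrite unitfE pnatr_eq0.
by congr (_ * _%:C); rewrite mul1r -invfM -natrM.
Qed.

End ComplexUnit.

Section HermitianDirac.
Variable R : realType.
Variable p : nat.
Local Notation n := (4 * p)%N.
Variable F : 'rV[R]_n -> clif R n.
Variable X : 'rV[R]_n.
Local Notation P a := (partial a F X).

Lemma DiracM_pairs (M : 'M[R]_n) A : DiracM M F X A = \sum_j
  ((clmul (Mapp M (ox (o2jm1 j))) (P (ox (o2jm1 j))) A
    + clmul (Mapp M (oy (o2jm1 j))) (P (oy (o2jm1 j))) A)
  + (clmul (Mapp M (ox (o2j j))) (P (ox (o2j j))) A
    + clmul (Mapp M (oy (o2j j))) (P (oy (o2j j))) A)).
Proof. by rewrite /DiracM clsumE big_ord_xy big_ord_pairs. Qed.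

Lemma Dz_Dirac A :
  Dz F X A = (Dirac F X A + 'i%C * DiracM (Imat R p) F X A) / 4%:R.
Proof.
rewrite -mul_half_half /Dz /Dirac /DiracM !clsumE !big_ord_xy.
rewrite mulr_sumr -big_split !mulr_sumr; apply: eq_bigr => k _ /=.
rewrite MappI_ox MappI_oy /wittd /dz /clsub.
rewrite !(clmulDl, clmulDr, clmulZl, clmulZr, clmulNl, clmulNr).
(* Abstracting the Clifford products keeps [ring] fast. *)
move: (clmul (gen (ox k)) (P (ox k))) (clmul (gen (ox k)) (P (oy k)))
  (clmul (gen (oy k)) (P (ox k))) (clmul (gen (oy k)) (P (oy k))) => a b c d.
by rewrite !ffunE; ring: (mulii R).
Qed.

Lemma Dzd_Dirac A :
  Dzd F X A = - (Dirac F X A - 'i%C * DiracM (Imat R p) F X A) / 4%:R.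
Proof.
rewrite -mul_half_half /Dzd /Dirac /DiracM !clsumE !big_ord_xy.
rewrite mulr_sumr -sumrB -sumrN !mulr_sumr; apply: eq_bigr => k _ /=.
rewrite MappI_ox MappI_oy /witt /dzb.
rewrite !(clmulDl, clmulDr, clmulZl, clmulZr, clmulNl, clmulNr).
move: (clmul (gen (ox k)) (P (ox k))) (clmul (gen (ox k)) (P (oy k)))
  (clmul (gen (oy k)) (P (ox k))) (clmul (gen (oy k)) (P (oy k))) => a b c d.
by rewrite !ffunE; ring: (mulii R).
Qed.

Lemma DzJ_Dirac A : DzJ F X A =
  (DiracM (Jmat R p) F X A - 'i%C * DiracM (Kmat R p) F X A) / 4%:R.
Proof.
rewrite -mul_half_half /DzJ clsumE !DiracM_pairs.
rewrite mulr_sumr -sumrB !mulr_sumr; apply: eq_bigr => j _ /=.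
rewrite MappJ_ox_odd MappJ_oy_odd MappJ_ox_even MappJ_oy_even.
rewrite MappK_ox_odd MappK_oy_odd MappK_ox_even MappK_oy_even /witt /dz /clsub.
rewrite !(clmulDl, clmulDr, clmulZl, clmulZr, clmulNl, clmulNr).
move: (clmul (gen (ox (o2jm1 j))) (P (ox (o2j j)))) (clmul (gen (ox (o2jm1 j))) (P (oy (o2j j))))
  (clmul (gen (oy (o2jm1 j))) (P (ox (o2j j)))) (clmul (gen (oy (o2jm1 j))) (P (oy (o2j j))))
  (clmul (gen (ox (o2j j))) (P (ox (o2jm1 j)))) (clmul (gen (ox (o2j j))) (P (oy (o2jm1 j))))
  (clmul (gen (oy (o2j j))) (P (ox (o2jm1 j)))) (clmul (gen (oy (o2j j))) (P (oy (o2jm1 j))))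
  => a1 a2 a3 a4 b1 b2 b3 b4.
by rewrite !ffunE; ring: (mulii R).
Qed.

Lemma DzdJ_Dirac A : DzdJ F X A =
  - (DiracM (Jmat R p) F X A + 'i%C * DiracM (Kmat R p) F X A) / 4%:R.
Proof.
rewrite -mul_half_half /DzdJ clsumE !DiracM_pairs.
rewrite mulr_sumr -big_split -sumrN !mulr_sumr; apply: eq_bigr => j _ /=.
rewrite MappJ_ox_odd MappJ_oy_odd MappJ_ox_even MappJ_oy_even.
rewrite MappK_ox_odd MappK_oy_odd MappK_ox_even MappK_oy_even /wittd /dzb /clsub.
rewrite !(clmulDl, clmulDr, clmulZl, clmulZr, clmulNl, clmulNr).
move: (clmul (gen (ox (o2jm1 j))) (P (ox (o2j j)))) (clmul (gen (ox (o2jm1 j))) (P (oy (o2j j))))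
  (clmul (gen (oy (o2jm1 j))) (P (ox (o2j j)))) (clmul (gen (oy (o2jm1 j))) (P (oy (o2j j))))
  (clmul (gen (ox (o2j j))) (P (ox (o2jm1 j)))) (clmul (gen (ox (o2j j))) (P (oy (o2jm1 j))))
  (clmul (gen (oy (o2j j))) (P (ox (o2jm1 j)))) (clmul (gen (oy (o2j j))) (P (oy (o2jm1 j))))
  => a1 a2 a3 a4 b1 b2 b3 b4.
by rewrite !ffunE; ring: (mulii R).
Qed.

End HermitianDirac.

Arguments Dz_Dirac {R p}. Arguments Dzd_Dirac {R p}.
Arguments DzJ_Dirac {R p}. Arguments DzdJ_Dirac {R p}.

Lemma hermitian_Dirac_eq0 (R : realType) p (F : 'rV[R]_(4 * p) -> clif R (4 * p)) X :
  [/\ Dz F X = cl0 R _, Dzd F X = cl0 R _, DzJ F X = cl0 R _ & DzdJ F X = cl0 R _] <->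
  [/\ Dirac F X = cl0 R _, DiracM (Imat R p) F X = cl0 R _,
      DiracM (Jmat R p) F X = cl0 R _ & DiracM (Kmat R p) F X = cl0 R _].
Proof.
have I := cl_quarter_pair_eq0 (mulii R) (Dz_Dirac F X) (Dzd_Dirac F X).
have mulNiNi : - 'i%C * - 'i%C = -1 :> R[i] by rewrite mulrNN mulii.
have JK : DzJ F X = cl0 R _ /\ DzdJ F X = cl0 R _ <->
    DiracM (Jmat R p) F X = cl0 R _ /\ DiracM (Kmat R p) F X = cl0 R _.
  apply: (cl_quarter_pair_eq0 mulNiNi) => A.
    by rewrite DzJ_Dirac (mulNr 'i%C).
  by rewrite DzdJ_Dirac (mulNr 'i%C) opprK.
split=> -[a b c d].
  by have [[? ?] [? ?]] := (I.1 (conj a b), JK.1 (conj c d)).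
by have [[? ?] [? ?]] := (I.2 (conj a b), JK.2 (conj c d)).
Qed.

Theorem proposition2 (R : realType) (p : nat) (Omega : set 'rV[R]_(4 * p))
  (F : 'rV[R]_(4 * p) -> clif R (4 * p)) :
  open Omega ->
  (forall X, Omega X -> in_spinor (F X)) ->
  (forall X, Omega X -> cl_differentiable F X) ->
  (q_monogenic Omega F <->
   (forall X, Omega X ->
      [/\ Dz F X = cl0 R (4 * p), Dzd F X = cl0 R (4 * p),
          DzJ F X = cl0 R (4 * p) & DzdJ F X = cl0 R (4 * p)])).
Proof.
by move=> _ _ _; split=> DF X /DF /hermitian_Dirac_eq0.
Qed.
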